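(* Let $n,m,\ell$ be integers with $n-1\ge m\ge \ell\ge 0$. Then $$\sum_{j=0}^{n-m-2}\binom{n-m+\ell-3-2j}{\ell-1-j}\,\mathcal Y_n\big(2^{\{m-\ell+1+j\}},1^{\{n-m+\ell-3-2j\}}\big)=\frac{1}{n(m+1)}\binom{n-1}{m}\left(\binom{n}{\ell}-\binom{m+1}{\ell}\right).$$ In particular (case $\ell=1$), $\mathcal Y_n(2^{\{m\}},1^{\{n-m-2\}})=\frac{n-m-1}{n(m+1)}\binom{n-1}{m}$.
   Context: Let $\zeta_n=e^{2\pi\sqrt{-1}/n}$. For integers $s_1,\dots,s_m$, define $\mathfrak Z_n(s_1,\dots,s_m):=\sum_{1\le i_1<\cdots<i_m\le n-1}\prod_{k=1}^{m}(1-\zeta_n^{i_k})^{-s_k}$ (equal to $1$ if $m=0$ and to $0$ if $m>n-1$). Define $\mathcal Y_n(s_1,\dots,s_m):=\sum_{\sigma}\mathfrak Z_n(\sigma)$, where $\sigma$ runs over all distinct sequences obtained by rearranging $(s_1,\dots,s_m)$ (each distinct rearrangement counted once); $\mathcal Y_n$ of the empty sequence is $1$. Notation: $a^{\{k\}}$ denotes the block $a,a,\dots,a$ of length $k$; any term $\mathcal Y_n(\dots)$ in which some block has negative length is interpreted as $0$. Binomial coefficients $\binom{a}{b}$ are $0$ when $b<0$ or $b>a\ge0$. *)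

From mathcomp Require Import all_boot all_order all_algebra.
From mathcomp Require Import complex.
From mathcomp Require Import reals trigo.
Set Implicit Arguments. Unset Strict Implicit. Unset Printing Implicit Defensive.
Import GRing.Theory Num.Theory.
Local Open Scope ring_scope.
Local Open Scope complex_scope.

Definition zeta (R : realType) (n : nat) : R[i] :=
  (cos (2 * pi / n%:R))%:C + 'i * (sin (2 * pi / n%:R))%:C.

(* Zrec n s lo = sum over lo <= i_1 < ... < i_m <= n-1 of
   prod_k (1 - zeta^{i_k})^{-s_k}, where s = (s_1,...,s_m). *)
Fixpoint Zrec (R : realType) (n : nat) (s : seq int) (lo : nat) : R[i] :=
  match s with
  | [::] => 1
  | k :: s' => \sum_(lo <= j < n) (1 - zeta R n ^+ j) ^ (- k) * Zrec R n s' j.+1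
  end.

Definition Zn (R : realType) (n : nat) (s : seq int) : R[i] := Zrec R n s 1.

(* cal Y_n(s) : sum over distinct rearrangements of s
   ([permutations s] is the duplicate-free list of all permutations of s). *)
Definition Yn (R : realType) (n : nat) (s : seq int) : R[i] :=
  \sum_(t <- permutations s) Zn R n t.

Definition Y21 (R : realType) (n : nat) (a b : int) : R[i] :=
  if (0 <= a) && (0 <= b) then Yn R n (nseq `|a|%N 2%:Z ++ nseq `|b|%N 1%:Z)
  else 0.

(* binomial (a choose b) for integers a, b, as an element of R[i]:
   0 when b < 0 or b > a >= 0.  (Only used with a >= 0 below.) *)
Definition binZ (R : realType) (a b : int) : R[i] :=
  if (0 <= a) && (0 <= b) then ('C(`|a|%N, `|b|%N))%:R else 0.

From mathcomp Require Import all_boot all_order all_algebra.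
From mathcomp Require Import complex.
From mathcomp Require Import reals trigo.
From mathcomp Require Import zify ring.
Set Implicit Arguments. Unset Strict Implicit. Unset Printing Implicit Defensive.
Import Order.TTheory GRing.Theory Num.Theory.
Local Open Scope ring_scope.
Local Open Scope complex_scope.

(* Put x_j = (1 - zeta^j)^-1 for 0 < j < n.  Then Y_n(2^{a}, 1^{b}) is the sum of
   prod_(i in A) x_i^2 * prod_(i in B) x_i over disjoint index sets with |A| = a,
   |B| = b, and since the 1 - zeta^j are the nonzero roots of (X + 1)^n - 1, the
   elementary symmetric functions of the x_j are e_k = C(n, k + 1) / n.  Expanding
   e_m * e_(n-l-1) according to the size a of the intersection of the two index
   sets gives sum_a C(m + n - l - 1 - 2a, m - a) Y_n(2^{a}, 1^{m + n - l - 1 - 2a});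
   the terms with a > m - l are the left-hand side, while the term a = m - l uses
   every index and equals C(n - 1 - m + l, l) (prod_j x_j) e_(m-l). *)

Section SymmetricFunctions.
Variable T : comNzRingType.
Implicit Types (s : seq T) (x : T).

Fixpoint esym (k : nat) s : T :=
  match s with
  | [::] => (k == 0)%:R
  | x :: s' => (if k is k'.+1 then x * esym k' s' else 0) + esym k s'
  end.

(* [esym21 a b s] is the sum of [\prod_(i in A) s_i ^+ 2 * \prod_(i in B) s_i]
   over disjoint index sets [A], [B] with [#|A| = a] and [#|B| = b]. *)
Fixpoint esym21 (a b : nat) s : T :=
  match s with
  | [::] => ((a == 0) && (b == 0))%:R
  | x :: s' => esym21 a b s' + (if a is a'.+1 then x ^+ 2 * esym21 a' b s' else 0)
               + (if b is b'.+1 then x * esym21 a b' s' else 0)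
  end.

(* The part of [esym K s * esym L s] coming from pairs of index sets that
   share exactly [a] indices. *)
Definition esym_overlap (K L a : nat) s : T :=
  if (a <= K)%N && (a <= L)%N then
    ('C((K - a) + (L - a), K - a))%:R * esym21 a ((K - a) + (L - a)) s
  else 0.

Lemma esym21_cons a b x s : esym21 a b (x :: s) = esym21 a b s
  + (if a is a'.+1 then x ^+ 2 * esym21 a' b s else 0)
  + (if b is b'.+1 then x * esym21 a b' s else 0).
Proof. by []. Qed.

Lemma esym0 s : esym 0 s = 1.
Proof. by elim: s => [|x s IH] //=; rewrite add0r. Qed.

Lemma esym_oversize s k : (size s < k)%N -> esym k s = 0.
Proof.
elim: s k => [|x s IH] [|k] //= h.
by rewrite !IH ?mulr0 ?addr0 // ltnW.
Qed.

Lemma esym_size s : esym (size s) s = \prod_(x <- s) x.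
Proof.
elim: s => [|x s IH]; first by rewrite big_nil.
by rewrite /= IH esym_oversize // addr0 big_cons.
Qed.

Lemma esym21_00 s : esym21 0 0 s = 1.
Proof. by elim: s => [|x s IH] //=; rewrite IH !addr0. Qed.

Lemma esym21_oversize s a b : (size s < a + b)%N -> esym21 a b s = 0.
Proof.
elim: s a b => [|x s IH] a b /=; first by case: a => [|a] //; case: b.
move=> h; rewrite IH; last exact: ltn_trans h.
by case: a h => [|a] h; case: b h => [|b] h; rewrite ?IH ?mulr0 ?addr0 //; lia.
Qed.

Lemma esym21_full s a : (a <= size s)%N ->
  esym21 a (size s - a) s = (\prod_(x <- s) x) * esym a s.
Proof.
elim: s a => [|x s IH] a /=.
  by rewrite leqn0 => /eqP ->; rewrite big_nil mul1r.
move=> ha; rewrite big_cons esym21_oversize ?add0r; last first.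
  by rewrite subnKC // ltnS; apply: ltnW.
case: a ha => [|a] ha.
  by have := IH 0 (leq0n _); rewrite !subn0 /= => ->; ring.
rewrite !subSS IH //; rewrite ltnS in ha; case: (ltngtP a (size s)) => h.
- by rewrite -(subnSK h) /= IH //; ring.
- by rewrite leqNgt h in ha.
- by rewrite h subnn /= (@esym_oversize _ (size s).+1) //; ring.
Qed.

Lemma esym_overlap_out K L a s :
  ~~ ((a <= K)%N && (a <= L)%N) -> esym_overlap K L a s = 0.
Proof. by rewrite /esym_overlap => /negbTE ->. Qed.

Lemma esym_overlapE a i j s :
  esym_overlap (a + i) (a + j) a s = ('C(i + j, i))%:R * esym21 a (i + j) s.
Proof. by rewrite /esym_overlap !leq_addr /= !addKn. Qed.

Lemma esym_overlap_cons K L a x s :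
  esym_overlap K L a (x :: s) = esym_overlap K L a s
  + x ^+ 2 * (if a is a'.+1 then if K is K'.+1 then
               if L is L'.+1 then esym_overlap K' L' a' s else 0 else 0 else 0)
  + x * ((if K is K'.+1 then esym_overlap K' L a s else 0)
         + (if L is L'.+1 then esym_overlap K L' a s else 0)).
Proof.
have [|out] := boolP ((a <= K)%N && (a <= L)%N); last first.
  rewrite !esym_overlap_out //.
  case: a out => [|a]; case: K => [|K]; case: L => [|L] out;
    rewrite ?esym_overlap_out ?(mulr0, addr0) //;
    by apply: contra out => /andP[]; lia.
case/andP=> /subnKC <- /subnKC <-; move: (K - a)%N (L - a)%N => i j.
have -> : (if a is a'.+1 then if (a + i)%N is K'.+1 then
            if (a + j)%N is L'.+1 then esym_overlap K' L' a' s else 0 else 0 else 0)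
          = if a is a'.+1 then ('C(i + j, i))%:R * esym21 a' (i + j) s else 0.
  by case: a => //= a; rewrite esym_overlapE.
have -> : (if (a + i)%N is K'.+1 then esym_overlap K' (a + j) a s else 0)
          = if i is i'.+1 then ('C(i' + j, i'))%:R * esym21 a (i' + j) s else 0.
  case: i => [|i]; last by rewrite addnS esym_overlapE.
  by rewrite addn0; case: a => // a; rewrite esym_overlap_out // ltnn.
have -> : (if (a + j)%N is L'.+1 then esym_overlap (a + i) L' a s else 0)
          = if j is j'.+1 then ('C(i + j', i))%:R * esym21 a (i + j') s else 0.
  case: j => [|j]; last by rewrite addnS esym_overlapE.
  by rewrite addn0; case: a => // a; rewrite esym_overlap_out // ltnn andbF.
rewrite !esym_overlapE /=.
case: i => [|i]; case: j => [|j].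
- by case: a => [|a] /=; ring.
- by rewrite !add0n !bin0; case: a => [|a] /=; ring.
- by rewrite !addn0 binS bin_small //=; case: a => [|a] /=; ring.
- by rewrite !addSn binS natrD /= -addSn -addnS; case: a => [|a] /=; ring.
Qed.

Lemma esym_mul s N K L : (K < N)%N ->
  esym K s * esym L s = \sum_(0 <= a < N) esym_overlap K L a s.
Proof.
elim: s N K L => [|x s IH] N K L hK.
  case: N hK => // N _; rewrite big_nat_recl // big1 ?addr0; last first.
    by move=> a _; rewrite /esym_overlap /= mulr0; case: ifP.
  by rewrite /esym_overlap /= !subn0; case: K => [|K]; case: L => [|L]; rewrite ?mulr0 ?mul0r.
rewrite (eq_bigr _ (fun a _ => esym_overlap_cons K L a x s)) !big_split /= -!big_distrr /=.
have sum0 M : \sum_(0 <= a < M) (0 : T) = 0 by rewrite big1.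
have sum_pred0 M : \sum_(0 <= a < M) (if a is a'.+1 then (0 : T) else 0) = 0.
  by rewrite big1 // => -[|a].
case: K hK => [|K] hK; case: L => [|L]; rewrite ?sum_pred0 ?mulr0 ?addr0.
- by rewrite /= add0r sum0 -IH // !mulr0 !addr0.
- by rewrite big_split /= sum0 add0r -!IH //=; ring.
- by rewrite big_split /= sum0 addr0 -!IH //= 1?ltnW //; ring.
- case: N hK => // N hK.
  rewrite big_split /= [X in x ^+ 2 * X]big_nat_recl //= add0r -!IH // 1?ltnW //.
  ring.
Qed.

(* When [K + L = size s + d], two index sets share at least [d] indices, and
   exactly [d] only if together they cover [s]. *)
Lemma esym_mul_cover s d K L : (K + L = size s + d)%N -> (d <= K)%N -> (d <= L)%N ->
  esym K s * esym L s = ('C(size s - d, K - d))%:R * ((\prod_(x <- s) x) * esym d s)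
                        + \sum_(d.+1 <= a < (size s).+1) esym_overlap K L a s.
Proof.
move=> hKL hdK hdL.
have hdN : (d <= size s)%N by lia.
rewrite (@esym_mul _ (size s).+1) ?ltnS; last by lia.
rewrite (big_cat_nat _ (n := d)) //= 1?ltnW // big1_seq ?add0r; last first.
  move=> a; rewrite mem_index_iota => /andP[_ ha]; rewrite /esym_overlap.
  by case: ifP => // _; rewrite esym21_oversize ?mulr0 //; lia.
rewrite big_ltn ?ltnS // /esym_overlap hdK hdL /=.
have -> : (K - d + (L - d) = size s - d)%N by lia.
by rewrite esym21_full.
Qed.

End SymmetricFunctions.

Lemma big_permutations_head (T : eqType) (V : nmodType) (s : seq T) (F : seq T -> V) :
  (0 < size s)%N ->
  \sum_(t <- permutations s) F t =
  \sum_(h <- undup s) \sum_(t <- permutations (rem h s)) F (h :: t).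
Proof. by move=> hs; rewrite (perm_big _ (permutationsE hs)) big_allpairs_dep. Qed.

Definition blocks21 (a b : nat) : seq int := nseq a 2%:Z ++ nseq b 1%:Z.

Lemma mem_blocks21 a b h :
  (h \in blocks21 a b) = ((0 < a)%N && (h == 2%:Z)) || ((0 < b)%N && (h == 1%:Z)).
Proof. by rewrite mem_cat !mem_nseq. Qed.

Lemma big_undup_blocks21 (V : nmodType) a b (G : int -> V) :
  \sum_(h <- undup (blocks21 a b)) G h =
  (if (0 < a)%N then G 2%:Z else 0) + (if (0 < b)%N then G 1%:Z else 0).
Proof.
have P : perm_eq (undup (blocks21 a b)) [seq h <- [:: 2%:Z; 1%:Z] | h \in blocks21 a b].
  apply: uniq_perm; rewrite ?undup_uniq ?filter_uniq // => h.
  rewrite mem_undup mem_filter mem_blocks21 !inE.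
  by case: (h == 2%:Z); case: (h == 1%:Z); rewrite ?andbT ?andbF ?orbF ?orbT.
rewrite (perm_big _ P) big_filter !big_cons big_nil !mem_blocks21 /= addr0.
by case: a {P} => [|a]; case: b => [|b]; rewrite /= ?add0r ?addr0.
Qed.

Lemma rem2_blocks21 a b : rem 2%:Z (blocks21 a.+1 b) = blocks21 a b.
Proof. by []. Qed.

Lemma rem1_blocks21 a b : rem 1%:Z (blocks21 a b.+1) = blocks21 a b.
Proof.
rewrite /blocks21; elim: a => [|a IH] //.
by rewrite /= IH.
Qed.

Section ZetaSums.
Variables (R : realType) (n : nat).
Local Notation z := (zeta R n).

Definition zeta_tail (lo : nat) : seq R[i] :=
  [seq (1 - z ^+ j)^-1 | j <- iota lo (n - lo)].

Definition Y21_from (a b lo : nat) : R[i] :=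
  \sum_(t <- permutations (blocks21 a b)) Zrec R n t lo.

Lemma Y21_from_rec a b lo : (0 < a + b)%N ->
  Y21_from a b lo =
    (if a is a'.+1 then \sum_(lo <= j < n) (1 - z ^+ j)^-1 ^+ 2 * Y21_from a' b j.+1 else 0)
  + (if b is b'.+1 then \sum_(lo <= j < n) (1 - z ^+ j)^-1 * Y21_from a b' j.+1 else 0).
Proof.
move=> hab; rewrite /Y21_from big_permutations_head ?size_cat ?size_nseq //.
rewrite big_undup_blocks21.
have head_sum (h : int) s : \sum_(t <- permutations s) Zrec R n (h :: t) lo =
    \sum_(lo <= j < n) (1 - z ^+ j) ^ (- h) * \sum_(t <- permutations s) Zrec R n t j.+1.
  rewrite /= exchange_big /=; by apply: eq_bigr => j _; rewrite big_distrr.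
congr (_ + _).
  case: a {hab} => [|a] //; rewrite rem2_blocks21 head_sum /=.
  by apply: eq_bigr => j _; rewrite exprVn.
by case: b {hab} => [|b] //; rewrite rem1_blocks21 head_sum.
Qed.

Lemma zeta_tail_cons lo : (lo < n)%N -> zeta_tail lo = (1 - z ^+ lo)^-1 :: zeta_tail lo.+1.
Proof. by move=> hlo; rewrite /zeta_tail -(subnSK hlo). Qed.

Lemma esym21_zeta_tail_rec a b lo : (0 < a + b)%N -> (lo <= n)%N ->
  esym21 a b (zeta_tail lo) =
    (if a is a'.+1 then
       \sum_(lo <= j < n) (1 - z ^+ j)^-1 ^+ 2 * esym21 a' b (zeta_tail j.+1) else 0)
  + (if b is b'.+1 then
       \sum_(lo <= j < n) (1 - z ^+ j)^-1 * esym21 a b' (zeta_tail j.+1) else 0).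
Proof.
move=> hab; have [k] := ubnP (n - lo); elim: k lo => // k IH lo hk hlo.
have [->|hlt] := eqVneq lo n.
  rewrite /zeta_tail subnn.
  by case: a {IH} hab => [|a]; case: b => [|b]; rewrite ?big_geq ?addr0.
have {}hlt : (lo < n)%N by rewrite ltn_neqAle hlt.
have hk' : (n - lo.+1 < k)%N by lia.
rewrite zeta_tail_cons // esym21_cons (IH lo.+1) //.
have sum_lo (F : nat -> R[i]) : \sum_(lo <= j < n) F j = F lo + \sum_(lo.+1 <= j < n) F j.
  exact: big_ltn.
case: a {IH} hab => [|a]; case: b => [|b] hab; rewrite ?sum_lo.
- by move: hab; rewrite ltnn.
- by rewrite !add0r addr0 addrC.
- by rewrite !addr0 addrC.
- by rewrite addrACA [RHS]addrC addrA.
Qed.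

Lemma Y21_fromE a b lo : (lo <= n)%N -> Y21_from a b lo = esym21 a b (zeta_tail lo).
Proof.
have [k] := ubnP (a + b); elim: k a b lo => // k IH a b lo hk hlo.
have [/eqP|hab] := posnP (a + b).
  by rewrite addn_eq0 => /andP[/eqP-> /eqP->]; rewrite /Y21_from big_seq1 esym21_00.
rewrite Y21_from_rec // esym21_zeta_tail_rec //.
congr (_ + _); [case: a hk {hab} => [|a] hk | case: b hk {hab} => [|b] hk];
  try reflexivity; apply: eq_big_nat => j /andP[_ hj]; rewrite IH //; lia.
Qed.

Lemma Y21_esym21 a b : (0 < n)%N -> Y21 R n a%:Z b%:Z = esym21 a b (zeta_tail 1).
Proof. by move=> hn; rewrite /Y21 /= -Y21_fromE. Qed.

End ZetaSums.

Lemma coef_prod_XaddC (F : fieldType) (cs : seq F) k : all (fun c => c != 0) cs ->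
  (\prod_(c <- cs) ('X + c%:P))`_k = (\prod_(c <- cs) c) * esym k [seq c^-1 | c <- cs].
Proof.
elim: cs k => [|c cs IH] k /=; first by rewrite !big_nil coef1 mul1r.
case/andP=> hc hcs; rewrite !big_cons mulrDl coefD coefXM coefCM.
by case: k => [|k] /=; rewrite !IH //; [rewrite add0r; ring | field].
Qed.

Lemma coef_XaddC_exp (F : nzRingType) (m k : nat) :
  (('X + 1 : {poly F}) ^+ m)`_k = ('C(m, k))%:R.
Proof.
elim: m k => [|m IH] k; first by rewrite expr0 coef1 bin0n.
rewrite exprSr mulrDr mulr1 coefD coefMX; case: k => [|k] /=.
  by rewrite add0r IH !bin0.
by rewrite !IH binS natrD addrC.
Qed.

Lemma cos_lt1 (R : realType) (t : R) : 0 < t < pi *+ 2 -> cos t < 1.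
Proof.
have cos_lt1_0pi (u : R) : 0 < u <= pi -> cos u < 1.
  move=> /andP[u0 upi]; have := @ltr_cos R 0 u.
  by rewrite !in_itv /= lexx pi_ge0 upi (ltW u0) cos0 => ->.
move=> /andP[t0 t2pi]; have [tpi|pit] := lerP t pi; first by apply: cos_lt1_0pi; rewrite t0.
rewrite -[t](subrK (pi *+ 2)) cosD2pi -cosN opprB; apply: cos_lt1_0pi.
rewrite subr_gt0 t2pi /=.
by rewrite lerBlDr mulr2n lerD2l ltW.
Qed.

Section RootsOfUnity.
Variables (R : realType) (n : nat).
Hypothesis n_gt0 : (0 < n)%N.
Local Notation z := (zeta R n).

Lemma zeta_expr k :
  z ^+ k = (cos (k%:R * (2 * pi / n%:R)))%:C + 'i * (sin (k%:R * (2 * pi / n%:R)))%:C.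
Proof.
have mul_iu (a b c d : R) : (a%:C + 'i * b%:C) * (c%:C + 'i * d%:C)
    = (a * c - b * d)%:C + 'i * (b * c + a * d)%:C :> R[i].
  transitivity (a%:C * c%:C + ('i * 'i) * (b%:C * d%:C) + 'i * (b%:C * c%:C + a%:C * d%:C)).
    by ring.
  by rewrite -expr2 sqr_i rmorphB rmorphD !rmorphM; ring.
elim: k => [|k IH]; first by rewrite expr0 mul0r cos0 sin0 rmorph1 rmorph0 mulr0 addr0.
by rewrite exprSr IH /zeta mul_iu -cosD -sinD -[k.+1]addn1 natrD (mulrDl k%:R) mul1r.
Qed.

Lemma zeta_exprn : z ^+ n = 1.
Proof.
rewrite zeta_expr mulrC divfK ?pnatr_eq0 -?lt0n // mulr_natl cos2pi sin2pi.
by rewrite mulr0 addr0.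
Qed.

Lemma zeta_expr_neq1 j : (0 < j < n)%N -> z ^+ j != 1.
Proof.
move=> /andP[j0 jn]; apply/eqP; rewrite zeta_expr => /(congr1 (@complex.Re R)).
rewrite /= mul0r mul1r subr0 addr0 => cos1.
have th0 : 0 < 2 * pi / n%:R :> R by rewrite divr_gt0 ?mulr_gt0 ?pi_gt0 ?ltr0n.
have nth : n%:R * (2 * pi / n%:R) = pi *+ 2 :> R.
  by rewrite mulrC divfK ?pnatr_eq0 -?lt0n // mulr_natl.
have := @cos_lt1 R (j%:R * (2 * pi / n%:R)).
by rewrite cos1 ltxx mulr_gt0 ?ltr0n //= -nth ltr_pM2r // ltr_nat => /(_ jn).
Qed.

Lemma zeta_prim : n.-primitive_root z.
Proof.
apply/andP; split=> //; apply/forallP => i; apply/eqP; rewrite unity_rootE.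
have [->|ni] := eqVneq i.+1 n; first by rewrite zeta_exprn eqxx.
by apply/negbTE/zeta_expr_neq1; rewrite ltn0Sn ltn_neqAle ni ltn_ord.
Qed.

Definition one_sub_zeta : seq R[i] := [seq 1 - z ^+ j | j <- iota 1 (n - 1)].

(* Substituting [X + 1] in [\prod_(i < n) (X - z^i) = X^n - 1]. *)
Lemma prod_XaddC_one_sub_zeta :
  'X * \prod_(c <- one_sub_zeta) ('X + c%:P) = ('X + 1) ^+ n - 1.
Proof.
have := congr1 (comp_poly ('X + 1)) (factor_Xn_sub_1 zeta_prim).
rewrite rmorph_prod rmorphB rmorph1 rmorphXn /= comp_polyX => <-.
rewrite big_ltn // /one_sub_zeta big_map /index_iota subn1.
congr (_ * _).
  by rewrite comp_polyB comp_polyX comp_polyC expr0 polyC1 addrK.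
by apply: eq_bigr => i _; rewrite comp_polyB comp_polyX comp_polyC rmorphB rmorph1 addrA.
Qed.

Lemma coef_prod_one_sub_zeta k :
  (\prod_(c <- one_sub_zeta) ('X + c%:P))`_k = ('C(n, k.+1))%:R.
Proof.
have := congr1 (fun p : {poly R[i]} => p`_k.+1) prod_XaddC_one_sub_zeta.
by rewrite /= coefXM /= coefB coef_XaddC_exp coef1 subr0.
Qed.

Lemma one_sub_zeta_neq0 : all (fun c => c != 0) one_sub_zeta.
Proof.
apply/allP => c /mapP[j]; rewrite mem_iota => /andP[j1 jn] ->.
by rewrite subr_eq0 eq_sym zeta_expr_neq1 // j1 -(subnKC n_gt0).
Qed.

Lemma prod_one_sub_zeta : \prod_(c <- one_sub_zeta) c = n%:R.
Proof.
have := coef_prod_one_sub_zeta 0.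
by rewrite coef_prod_XaddC ?one_sub_zeta_neq0 // esym0 mulr1 bin1.
Qed.

Lemma esym_zeta_tail k : esym k (zeta_tail R n 1) = ('C(n, k.+1))%:R / n%:R.
Proof.
have := coef_prod_one_sub_zeta k.
rewrite coef_prod_XaddC ?one_sub_zeta_neq0 // prod_one_sub_zeta => <-.
rewrite /zeta_tail /one_sub_zeta -map_comp subn1 [n%:R * _]mulrC mulfK //.
by rewrite pnatr_eq0 -lt0n.
Qed.

Lemma size_zeta_tail : size (zeta_tail R n 1) = (n - 1)%N.
Proof. by rewrite size_map size_iota. Qed.

End RootsOfUnity.

Lemma bin_trinomial l c p :
  ('C(l + p, l) * 'C(l + c + p, c) = 'C(l + c + p, l + c) * 'C(l + c, l))%N.
Proof.
have h1 := bin_fact (leq_addr p l).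
have h2 := bin_fact (leq_trans (leq_addl l c) (leq_addr p (l + c))).
have h3 := bin_fact (leq_addr p (l + c)).
have h4 := bin_fact (leq_addr c l).
rewrite addKn in h1; rewrite addKn in h3; rewrite addKn in h4.
have e : (l + c + p - c = l + p)%N by lia.
rewrite e in h2.
apply/eqP; rewrite -(@eqn_pmul2r (l`! * c`! * p`!)); last by rewrite !muln_gt0 !fact_gt0.
apply/eqP.
transitivity ('C(l + c + p, c) * (c`! * ('C(l + p, l) * (l`! * p`!))))%N; first by ring.
rewrite h1 h2.
transitivity ('C(l + c + p, l + c) * (('C(l + c, l) * (l`! * c`!)) * p`!))%N; last by ring.
by rewrite h4 h3.
Qed.

Lemma binZ_nat (R : realType) p q : binZ R p%:Z q%:Z = ('C(p, q))%:R.
Proof. by []. Qed.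

Lemma binZ_neg (R : realType) x y : (y < 0)%R -> binZ R x y = 0.
Proof. by rewrite /binZ ltNge => /negbTE ->; rewrite andbF. Qed.

Section Theorem2.
Variables (R : realType) (n m l : nat).
Hypotheses (l_le_m : (l <= m)%N) (m_lt_n : (m < n)%N).
Local Notation x := (zeta_tail R n 1).

(* For [j >= l] both sides vanish. *)
Lemma binZ_Y21_overlap j : (j < n - m - 1)%N ->
  binZ R (n%:Z - m%:Z + l%:Z - 3 - 2 * j%:Z) (l%:Z - 1 - j%:Z) *
  Y21 R n (m%:Z - l%:Z + 1 + j%:Z) (n%:Z - m%:Z + l%:Z - 3 - 2 * j%:Z)
  = esym_overlap m (n - l - 1) (j + (m - l).+1) x.
Proof.
move=> hj; have [jl|lj] := ltnP j l; last first.
  rewrite binZ_neg ?mul0r ?esym_overlap_out //; last by lia.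
  by apply/negP => /andP[]; lia.
have -> : n%:Z - m%:Z + l%:Z - 3 - 2 * j%:Z = ((l - 1 - j) + (n - m - 2 - j))%N%:Z by lia.
have -> : l%:Z - 1 - j%:Z = (l - 1 - j)%N%:Z by lia.
have -> : m%:Z - l%:Z + 1 + j%:Z = (j + (m - l).+1)%N%:Z by lia.
rewrite binZ_nat Y21_esym21 /esym_overlap; last by lia.
rewrite ifT; last by apply/andP; split; lia.
have -> : (m - (j + (m - l).+1) = l - 1 - j)%N by lia.
by have -> : (n - l - 1 - (j + (m - l).+1) = n - m - 2 - j)%N by lia.
Qed.

Lemma sum_overlap_zeta_tail :
  \sum_((m - l).+1 <= a < n - l) esym_overlap m (n - l - 1) a x =
  esym m x * esym (n - l - 1) x
  - ('C(n - 1 - m + l, l))%:R * ((\prod_(y <- x) y) * esym (m - l) x).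
Proof.
have hKL : (m + (n - l - 1) = size x + (m - l))%N by rewrite size_zeta_tail; lia.
have hdL : (m - l <= n - l - 1)%N by lia.
rewrite (esym_mul_cover hKL (leq_subr _ _) hdL) size_zeta_tail.
have nS : (n - 1).+1 = n by lia.
have binN : (n - 1 - (m - l) = n - 1 - m + l)%N by lia.
have binK : (m - (m - l) = l)%N by lia.
rewrite nS binN binK addrC addKr [RHS](big_cat_nat _ (n := (n - l)%N)) /=;
  [| lia | exact: leq_subr].
rewrite [X in _ + X]big1_seq ?addr0 // => a /andP[_].
rewrite mem_index_iota => /andP[la _].
by rewrite esym_overlap_out //; apply/negP => /andP[_]; lia.
Qed.

Lemma esym_zeta_tail_closed_form :
  esym m x * esym (n - l - 1) x
  - ('C(n - 1 - m + l, l))%:R * ((\prod_(y <- x) y) * esym (m - l) x)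
  = (n * (m + 1))%:R^-1 * ('C(n - 1, m))%:R * (('C(n, l))%:R - ('C(m + 1, l))%:R).
Proof.
have n_gt0 : (0 < n)%N by lia.
rewrite -[\prod_(y <- x) y]esym_size size_zeta_tail !esym_zeta_tail //.
have nS : (n - 1).+1 = n by lia.
have nlS : (n - l - 1).+1 = (n - l)%N by lia.
rewrite nS nlS binn bin_sub; last by lia.
have tri : ('C(n - 1 - m + l, l) * 'C(n, (m - l).+1) = 'C(n, m.+1) * 'C(m + 1, l))%N.
  have := bin_trinomial l (m.+1 - l) (n - 1 - m).
  rewrite (_ : (l + (m.+1 - l) + (n - 1 - m) = n)%N); last by lia.
  rewrite (_ : (m.+1 - l = (m - l).+1)%N); last by lia.
  by rewrite (_ : (l + (m - l).+1 = m + 1)%N) ?addn1 1?addnC //; lia.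
have n0 : (n%:R : R[i]) != 0 by rewrite pnatr_eq0 -lt0n.
have binE : ('C(n - 1, m))%:R = (m + 1)%:R * ('C(n, m.+1))%:R / n%:R :> R[i].
  have := congr1 (fun k => k%:R : R[i]) (mul_bin_diag n m).
  rewrite /= !natrM -subn1 => h; apply: (mulfI n0); rewrite h addn1; field; exact: n0.
transitivity (('C(n, m.+1))%:R * ('C(n, l))%:R / (n%:R * n%:R)
   - (('C(n - 1 - m + l, l) * 'C(n, (m - l).+1))%N)%:R / (n%:R * n%:R) : R[i]).
  by rewrite natrM; field.
by rewrite tri natrM binE natrM; field; rewrite n0 natr1 pnatr_eq0.
Qed.

Lemma sum_binZ_Y21 :
  \sum_(0 <= j < n - m - 1)
      binZ R (n%:Z - m%:Z + l%:Z - 3 - 2 * j%:Z) (l%:Z - 1 - j%:Z) *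
      Y21 R n (m%:Z - l%:Z + 1 + j%:Z) (n%:Z - m%:Z + l%:Z - 3 - 2 * j%:Z)
  = (n * (m + 1))%:R^-1 * ('C(n - 1, m))%:R * (('C(n, l))%:R - ('C(m + 1, l))%:R).
Proof.
have overlap j : (0 <= j < n - m - 1)%N -> _ := fun hj => binZ_Y21_overlap (proj2 (andP hj)).
rewrite (eq_big_nat _ _ overlap) -esym_zeta_tail_closed_form -sum_overlap_zeta_tail.
rewrite (_ : (n - m - 1 = n - l - (m - l).+1)%N); last by lia.
by rewrite -(big_addn 0 _ _ xpredT (fun a => esym_overlap m (n - l - 1) a x)).
Qed.

End Theorem2.

Lemma Y21_twos_ones (R : realType) (n m : nat) : (0 < m)%N -> (m < n)%N ->
  Y21 R n m%:Z (n%:Z - m%:Z - 2)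
  = (n%:Z - m%:Z - 1)%:~R / (n * (m + 1))%:R * ('C(n - 1, m))%:R.
Proof.
move=> m_gt0 m_lt_n; have := @sum_binZ_Y21 R n m 1 m_gt0 m_lt_n.
rewrite !bin1 -natrB ?addn1 // (_ : n%:Z - m%:Z - 1 = (n - m.+1)%N%:Z); last by lia.
rewrite mulrC -mulrA mulrC => <-.
have [nm|nm] := eqVneq (n - m - 1)%N 0%N.
  rewrite nm big_geq // /Y21 ifF //; apply/negbTE; rewrite negb_and -ltNge; lia.
rewrite big_ltn ?lt0n // big1_seq ?addr0; last first.
  move=> j /andP[_]; rewrite mem_index_iota => /andP[j1 _].
  by rewrite binZ_neg ?mul0r //; lia.
rewrite (_ : n%:Z - m%:Z + 1%:Z - 3 = (n - m - 2)%N%:Z); last by lia.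
rewrite (_ : n%:Z - m%:Z - 2 = (n - m - 2)%N%:Z); last by lia.
by rewrite subrK subrr /binZ /= bin0 mulr1n mul1r.
Qed.

Theorem theorem2 (R : realType) (n m l : nat) :
  (l <= m)%N -> (m <= n - 1)%N -> (0 < n)%N ->
  (\sum_(0 <= j < n - m - 1)
      binZ R (n%:Z - m%:Z + l%:Z - 3 - 2 * j%:Z) (l%:Z - 1 - j%:Z) *
      Y21 R n (m%:Z - l%:Z + 1 + j%:Z) (n%:Z - m%:Z + l%:Z - 3 - 2 * j%:Z)
   = (n * (m + 1))%:R^-1 * ('C(n - 1, m))%:R * (('C(n, l))%:R - ('C(m + 1, l))%:R))
  /\
  (l = 1%N ->
   Y21 R n m%:Z (n%:Z - m%:Z - 2)
   = (n%:Z - m%:Z - 1)%:~R / (n * (m + 1))%:R * ('C(n - 1, m))%:R).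
Proof.
move=> l_le_m m_le_n n_gt0; have m_lt_n : (m < n)%N by lia.
split; first exact: sum_binZ_Y21.
by move=> l1; subst l; apply: Y21_twos_ones.
Qed.
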